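(* Let $a\le b$ be real numbers and let $u,v\in L^\infty(\mathbb{T})$ satisfy $a\le v(x)\le b$ a.e. and $\int_{\mathbb{T}}u(x)\,dx=I\in[a,b]$. Then there exists $w\in L^\infty(\mathbb{T})$ such that $a\le w(x)\le b$ a.e., $\int_{\mathbb{T}}w(x)\,dx=I$, and $$\|u-w\|_{L^1(\mathbb{T})}\le2\|u-v\|_{L^1(\mathbb{T})}.$$
   Context: $\mathbb{T}=\mathbb{R}/\mathbb{Z}$ with Lebesgue measure of total mass $1$. *)

(* The torus T = R/Z with its normalized Lebesgue
   measure is modelled by the fundamental domain [0,1] with Lebesgue measure
   (the endpoint identification is a null set, irrelevant for L^oo / L^1). *)
From HB Require Import structures.
From mathcomp Require Import all_boot all_order all_algebra.
From mathcomp Require Import all_classical all_reals all_analysis.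
Set Implicit Arguments. Unset Strict Implicit. Unset Printing Implicit Defensive.
Import Order.TTheory GRing.Theory Num.Theory.
Import numFieldNormedType.Exports.
Local Open Scope classical_set_scope.
Local Open Scope ring_scope.

Definition Tdom {R : realType} : set R := `[0, 1]%classic.

Definition Linfty_T {R : realType} (f : R -> R) : Prop :=
  measurable_fun Tdom f /\
  exists M : R, {ae (@lebesgue_measure R), forall x, Tdom x -> `|f x| <= M}.

Definition ae_between_T {R : realType} (a b : R) (f : R -> R) : Prop :=
  {ae (@lebesgue_measure R), forall x, Tdom x -> a <= f x <= b}.

Definition int_T {R : realType} (f : R -> R) : \bar R :=
  (\int[@lebesgue_measure R]_(x in Tdom) (f x)%:E)%E.

Definition L1dist_T {R : realType} (f g : R -> R) : \bar R :=
  (\int[@lebesgue_measure R]_(x in Tdom) (`|f x - g x|)%:E)%E.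

From HB Require Import structures.
From mathcomp Require Import all_boot all_order all_algebra.
From mathcomp Require Import all_classical all_reals all_analysis.
From mathcomp Require Import lra measurable_realfun.

(* Clamping u to [a, b] is the pointwise nearest-point projection, so
   w0 := clamp a b u is at least as L1-close to u as v is.  The mean J of w0
   differs from I by at most |u - w0|_1.  Push w0 towards the endpoint c on
   the side of I by w0 + t (c - w0): since c - w0 has constant sign, this
   changes the mean by t (c - J) = I - J at an L1 cost of exactly |I - J|.
   The triangle inequality then gives the factor 2. *)

Import Order.TTheory GRing.Theory Num.Theory.
Local Open Scope ring_scope.

Definition clamp {R : realDomainType} (a b y : R) : R := Num.max a (Num.min b y).

Lemma clamp_between {R : realDomainType} (a b y : R) :
  a <= b -> a <= clamp a b y <= b.
Proof.
move=> ab; rewrite /clamp /Order.min /Order.max.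
by case: (ltP b y) => h1 /=; [case: (ltP a b) | case: (ltP a y)] => h2;
  apply/andP; split; lra.
Qed.

Lemma dist_clamp_le {R : realDomainType} (a b y z : R) : a <= z <= b ->
  `|y - clamp a b y| <= `|y - z|.
Proof.
move=> /andP[az zb]; rewrite /clamp /Order.min /Order.max.
case: (ltP b y) => h1 /=; [case: (ltP a b) | case: (ltP a y)] => h2.
all: rewrite ?subrr ?normr0 ?normr_ge0 //.
all: first [rewrite !ger0_norm; lra | rewrite !ler0_norm; lra].
Qed.

Lemma norm_le_between {R : realDomainType} (a b y : R) :
  a <= y <= b -> `|y| <= `|a| + `|b|.
Proof.
move=> /andP[ay yb]; rewrite ler_norml.
have := ler_norm a; have := ler_norm b.
have := ler_norm (- a); have := ler_norm (- b).
by rewrite !normrN => *; apply/andP; split; lra.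
Qed.

Lemma between_lerp {R : realDomainType} (a b y c t : R) :
  a <= y <= b -> a <= c <= b -> 0 <= t <= 1 -> a <= y + t * (c - y) <= b.
Proof.
move=> /andP[ay yb] /andP[ac cb] /andP[t0 t1].
have h1 : 0 <= t * (c - a) by rewrite mulr_ge0 // subr_ge0.
have h2 : 0 <= (1 - t) * (y - a) by rewrite mulr_ge0 // subr_ge0.
have h3 : 0 <= t * (b - c) by rewrite mulr_ge0 // subr_ge0.
have h4 : 0 <= (1 - t) * (b - y) by rewrite mulr_ge0 // subr_ge0.
by apply/andP; split; lra.
Qed.

Lemma segment_weight {R : realFieldType} {J c I : R} :
  (J <= I <= c) || (c <= I <= J) -> exists2 t, 0 <= t <= 1 & t * (c - J) = I - J.
Proof.
have [cJ|Jc|->] := ltgtP c J => seg.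
- have cJ0 : c - J < 0 by rewrite subr_lt0.
  exists ((I - J) / (c - J)); last by rewrite divfK // lt_eqF.
  by rewrite ler_ndivrMr // ler_ndivlMr // mul0r mul1r; move: seg; lra.
- have cJ0 : 0 < c - J by rewrite subr_gt0.
  exists ((I - J) / (c - J)); last by rewrite divfK // gt_eqF.
  by rewrite ler_pdivrMr // ler_pdivlMr // mul0r mul1r; move: seg; lra.
- exists 0; first by rewrite lexx ler01.
  by move: seg; rewrite orbb -eq_le => /eqP ->; rewrite subrr mul0r.
Qed.

Section unit_mass.
Local Open Scope ereal_scope.
Context {d : measure_display} {T : measurableType d} {R : realType}.
Context (mu : {measure set T -> \bar R}) {D : set T}.
Hypotheses (mD : measurable D) (muD : mu D = 1).

Lemma integral_cst_unit_mass (r : R) : \int[mu]_(x in D) r%:E = r%:E.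
Proof. by have := integral_cst mu mD r%:E; rewrite muD mule1. Qed.

Lemma integrable_ae_bounded {f : T -> R} (M : R) : measurable_fun D f ->
  {ae mu, forall x, D x -> (`|f x| <= M)%R} -> mu.-integrable D (EFin \o f).
Proof.
move=> mf fM; apply/integrableP; split; first exact/measurable_EFinP.
apply: (@le_lt_trans _ _ (\int[mu]_(x in D) `|M|%:E)); last first.
  by rewrite integral_cst_unit_mass ltry.
apply: ae_ge0_le_integral => //.
- by apply: measurableT_comp => //; exact/measurable_EFinP.
- move: fM; apply: filterS => x fxM Dx.
  by rewrite /= lee_fin (le_trans (fxM Dx)) // ler_norm.
Qed.

Lemma integrable_between {f : T -> R} {a b : R} : measurable_fun D f ->
  (forall x, D x -> a <= f x <= b)%R -> mu.-integrable D (EFin \o f).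
Proof.
move=> mf fab; apply: (integrable_ae_bounded (`|a| + `|b|)) => //.
by apply: aeW => x Dx; exact/norm_le_between/fab.
Qed.

Lemma integrable_cst_unit_mass (c : R) : mu.-integrable D (EFin \o cst c).
Proof. by apply: (@integrable_between _ c c) => // x _; rewrite lexx. Qed.

Lemma measurable_dist {f g : T -> R} :
  measurable_fun D f -> measurable_fun D g ->
  measurable_fun D (fun x => (`|f x - g x|)%:E).
Proof.
move=> mf mg; apply/measurable_EFinP.
exact: measurableT_comp (measurable_funB mf mg).
Qed.

Lemma L1_triangle {f g h : T -> R} :
  measurable_fun D f -> measurable_fun D g -> measurable_fun D h ->
  \int[mu]_(x in D) `|f x - h x|%:E <=
  \int[mu]_(x in D) `|f x - g x|%:E + \int[mu]_(x in D) `|g x - h x|%:E.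
Proof.
move=> mf mg mh; have dist_ge0 (p q : T -> R) x : D x -> 0 <= `|p x - q x|%:E.
  by rewrite lee_fin.
have mfg := measurable_dist mf mg; have mgh := measurable_dist mg mh.
rewrite -ge0_integralD //; apply: ge0_le_integral => //.
- exact: measurable_dist.
- exact: emeasurable_funD.
- by move=> x _; rewrite -EFinD lee_fin ler_distD.
Qed.

Lemma abse_integralB_le {f g : T -> R} :
  mu.-integrable D (EFin \o f) -> mu.-integrable D (EFin \o g) ->
  `|\int[mu]_(x in D) (f x)%:E - \int[mu]_(x in D) (g x)%:E| <=
  \int[mu]_(x in D) `|f x - g x|%:E.
Proof.
move=> intf intg; rewrite -integralB_EFin //.
under [X in _ <= X]eq_integral do rewrite -abse_EFin EFinB.
apply: le_abse_integral => //.
exact: emeasurable_funB (measurable_int mu intf) (measurable_int mu intg).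
Qed.

Lemma measurable_clamp {u : T -> R} (a b : R) : measurable_fun D u ->
  measurable_fun D (fun x => clamp a b (u x)).
Proof.
by move=> mfu; exact: measurable_maxr (measurable_cst a)
  (measurable_minr (measurable_cst b) mfu).
Qed.

Lemma L1_clamp_le {u v : T -> R} {a b : R} : measurable_fun D u -> measurable_fun D v ->
  {ae mu, forall x, D x -> a <= v x <= b}%R ->
  \int[mu]_(x in D) `|u x - clamp a b (u x)|%:E <= \int[mu]_(x in D) `|u x - v x|%:E.
Proof.
move=> mfu mv vab; have mcu := measurable_clamp a b mfu.
apply: ae_ge0_le_integral => //; [exact: measurable_dist | exact: measurable_dist |].
move: vab; apply: filterS => x vx Dx.
by rewrite lee_fin dist_clamp_le // vx.
Qed.

Lemma integral_dist_cst_one_sided {g : T -> R} {c J : R} :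
  mu.-integrable D (EFin \o g) ->
  (forall x, D x -> c <= g x)%R \/ (forall x, D x -> g x <= c)%R ->
  \int[mu]_(x in D) (g x)%:E = J%:E ->
  \int[mu]_(x in D) `|c - g x|%:E = `|c - J|%:E.
Proof.
move=> ig side gJ; have ic := integrable_cst_unit_mass c.
have dist_ge0 : 0 <= \int[mu]_(x in D) `|c - g x|%:E.
  by apply: integral_ge0 => x _; rewrite lee_fin.
case: side => [cg|gc].
- have Igc : \int[mu]_(x in D) `|c - g x|%:E = (J - c)%:E.
    rewrite EFinB -gJ -(integral_cst_unit_mass c) -(integralB_EFin mD ig ic).
    apply: eq_integral => x /[!inE] Dx.
    by rewrite -EFinB distrC ger0_norm // subr_ge0 cg.
  by rewrite Igc distrC ger0_norm // -lee_fin -Igc.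
- have Igc : \int[mu]_(x in D) `|c - g x|%:E = (c - J)%:E.
    rewrite EFinB -gJ -(integral_cst_unit_mass c) -(integralB_EFin mD ic ig).
    apply: eq_integral => x /[!inE] Dx.
    by rewrite -EFinB ger0_norm // subr_ge0 gc.
  by rewrite Igc ger0_norm // -lee_fin -Igc.
Qed.

Lemma shift_mass_within {g : T -> R} {a b J : R} (I : R) :
  measurable_fun D g -> (forall x, D x -> a <= g x <= b)%R ->
  \int[mu]_(x in D) (g x)%:E = J%:E -> (a <= I <= b)%R ->
  exists w : T -> R, [/\ measurable_fun D w, (forall x, D x -> a <= w x <= b)%R,
    \int[mu]_(x in D) (w x)%:E = I%:E &
    \int[mu]_(x in D) `|g x - w x|%:E = `|I - J|%:E].
Proof.
move=> mg gab gJ /andP[aI Ib]; have ig := integrable_between mg gab.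
have [c [cab side IJc]] : exists c, [/\ (a <= c <= b)%R,
    (forall x, D x -> c <= g x)%R \/ (forall x, D x -> g x <= c)%R &
    (J <= I <= c)%R || (c <= I <= J)%R].
  have [IJ|JI] := leP I J.
  - exists a; split; first by rewrite lexx (le_trans aI Ib).
    + by left => x /gab /andP[].
    + by rewrite aI orbT.
  - exists b; split; first by rewrite lexx (le_trans aI Ib).
    + by right => x /gab /andP[].
    + by rewrite Ib ltW.
have [t t01 tcJ] := segment_weight IJc; have /andP[t0 _] := t01.
have mcg : measurable_fun D (fun x => c - g x)%R :=
  measurable_funB (measurable_cst c) mg.
have icg : mu.-integrable D (EFin \o (fun x => c - g x)%R).
  apply: (@integrable_between _ (c - b) (c - a)) => // x /gab /andP[? ?].
  by apply/andP; split; rewrite lerD2l lerN2.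
have cgJ : \int[mu]_(x in D) (c - g x)%:E = (c - J)%:E.
  under eq_integral do rewrite EFinB.
  by rewrite (integralB_EFin mD (integrable_cst_unit_mass c) ig)
    integral_cst_unit_mass gJ.
exists (fun x => g x + t * (c - g x))%R; split.
- exact: measurable_funD mg (measurable_funM (measurable_cst t) mcg).
- by move=> x /gab gx; exact: between_lerp.
- under eq_integral do rewrite EFinD EFinM.
  rewrite integralD //; last exact: integrableZl.
  by rewrite integralZl // cgJ gJ -EFinM -EFinD tcJ addrC subrK.
- under eq_integral do rewrite opprD addNKr normrN normrM (ger0_norm t0) EFinM.
  rewrite ge0_integralZl_EFin //; last exact: measurable_dist (measurable_cst c) mg.
  rewrite (integral_dist_cst_one_sided ig side gJ) -EFinM.
  by rewrite -[t in (t * _)%R](ger0_norm t0) -normrM tcJ.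
Qed.

End unit_mass.

Lemma measurable_Tdom (R : realType) : measurable (@Tdom R).
Proof. exact: measurable_itv. Qed.

Lemma lebesgue_measure_Tdom (R : realType) : (@lebesgue_measure R) (@Tdom R) = 1%E.
Proof. by rewrite /Tdom lebesgue_measure_itv /= lte_fin ltr01 /= oppr0 adde0. Qed.

Theorem lemma3 (R : realType) (a b I : R) (u v : R -> R) :
  a <= b ->
  Linfty_T u -> Linfty_T v ->
  ae_between_T a b v ->
  int_T u = I%:E -> a <= I <= b ->
  exists w : R -> R,
    [/\ Linfty_T w, ae_between_T a b w, int_T w = I%:E &
        (L1dist_T u w <= 2%:E * L1dist_T u v)%E].
Proof.
move=> ab [mfu [M uM]] [mv _] vab uI Iab.
have mT := measurable_Tdom R; have T1 := lebesgue_measure_Tdom R.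
pose w0 x := clamp a b (u x).
have mw0 : measurable_fun Tdom w0 := measurable_clamp a b mfu.
have w0ab x : Tdom x -> a <= w0 x <= b by move=> _; exact: clamp_between.
have iw0 := integrable_between lebesgue_measure mT T1 mw0 w0ab.
have [J w0J] : exists J, int_T w0 = J%:E.
  by exists (fine (int_T w0)); rewrite fineK //; exact: integrable_fin_num iw0.
have IJ_le : (`|I - J|%:E <= L1dist_T u w0)%E.
  rewrite -abse_EFin EFinB -uI -w0J.
  have iu := integrable_ae_bounded lebesgue_measure mT T1 M mfu uM.
  exact (abse_integralB_le lebesgue_measure mT iu iw0).
have [w [mw wab wI w0w]] := shift_mass_within lebesgue_measure mT T1 I mw0 w0ab w0J Iab.
exists w; split => //.
- split => //; exists (`|a| + `|b|).
  by apply: aeW => x Tx; exact/norm_le_between/wab.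
- exact: aeW.
- apply: le_trans (L1_triangle lebesgue_measure mT mfu mw0 mw) _.
  rewrite w0w mule_natl mule2n; apply: leeD; last apply: le_trans IJ_le _.
  all: exact: L1_clamp_le.
Qed.
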